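(* Let $n\ge 2$ be an integer and $k$ an integer with $0\le k\le n-1$. Then $$e_k\left(\left\{\csc^2\left(\tfrac{j\pi}{2n}\right) : j=1,\dots,n-1\right\}\right) = \frac{4^k\,(n+k)!\,(n-1)!}{(2k+1)!\,(n-k-1)!\,n!}.$$
   Context: $e_k(\alpha_1,\dots,\alpha_m)$ denotes the degree-$k$ elementary symmetric function of $\alpha_1,\dots,\alpha_m$ (with $e_0=1$). *)

From Stdlib Require Import Reals List Arith.
Open Scope R_scope.

Fixpoint esym (k : nat) (l : list R) : R :=
  match k, l with
  | O, _ => 1
  | S _, nil => 0
  | S k', x :: l' => esym k l' + x * esym k' l'
  end.

Definition csc2 (x : R) : R := / (sin x ^ 2).

From Pilot Require Import Defs.
From Stdlib Require Import Reals List Arith Lia Lra.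
From mathcomp Require Import all_boot all_algebra.
From mathcomp Require Import Rstruct zify ring.
Import GRing.Theory Num.Theory.

(* Put n = p + 1.  The odd part W_p of the Chebyshev polynomial U_{2p+1},
   read as a polynomial in x^2, satisfies sin (2 n x) = sin x * cos x * W_p (cos x ^ 2),
   and its coefficients are explicit binomials:
   [X^k] W_p = (-1)^(p-k) C(p+1+k, p-k) 2^(2k+1).  At x = pi/2 - j pi/(2n) the left
   side vanishes, so the p distinct numbers s_j = sin^2 (j pi/(2n)) are the roots of
   W_p.  Writing W_p = W_p(0) * prod_j (1 - X / s_j), the ratio [X^k] W_p / W_p(0) is
   (-1)^k times the k-th elementary symmetric function of the 1 / s_j = csc^2 (j pi/(2n)). *)

Open Scope R_scope.

Definition angle (n j : nat) : R := INR j * PI / (2 * INR n).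

Lemma sin_natSS m x :
  sin (INR m.+2 * x) = (cos x + cos x) * sin (INR m.+1 * x) - sin (INR m * x).
Proof.
have -> : INR m.+2 * x = INR m.+1 * x + x by rewrite S_INR; lra.
have -> : INR m * x = INR m.+1 * x - x by rewrite S_INR; lra.
rewrite sin_plus sin_minus; lra.
Qed.

Lemma sin_nat_PI k : sin (INR k * PI) = 0.
Proof. by apply: sin_eq_0_1; exists (Z.of_nat k); rewrite -INR_IZR_INZ. Qed.

Lemma INR_half_angle n : (0 < n)%N -> INR n * (PI / (2 * INR n)) = PI / 2.
Proof.
move=> n_gt0; have n_neq0 : INR n <> 0 by apply: not_0_INR; lia.
by rewrite Rdiv_mult_distr Rmult_div_assoc Rmult_div_r.
Qed.

Lemma angle_bounds n j : (0 < j < n)%N -> 0 < angle n j < PI / 2.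
Proof.
move=> /andP[j_gt0 j_lt_n].
have j0 : 0 < INR j by apply: lt_0_INR; lia.
have /lt_INR jn : (j < n)%coq_nat by lia.
have step_gt0 : 0 < PI / (2 * INR n).
  by apply: Rdiv_lt_0_compat; [exact: PI_RGT_0 | lra].
rewrite /angle -Rmult_div_assoc -(INR_half_angle n); last lia.
split; [exact: Rmult_lt_0_compat | exact: Rmult_lt_compat_r].
Qed.

Lemma sin_angle_gt0 n j : (0 < j < n)%N -> 0 < sin (angle n j).
Proof. by move=> /angle_bounds ab; apply: sin_gt_0; have := PI_RGT_0; lra. Qed.

Lemma cos_angle_gt0 n j : (0 < j < n)%N -> 0 < cos (angle n j).
Proof. by move=> /angle_bounds ab; apply: cos_gt_0; lra. Qed.

Lemma sin_angle_sqr_lt n i j : (0 < i)%N -> (i < j < n)%N ->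
  sin (angle n i) ^ 2 < sin (angle n j) ^ 2.
Proof.
move=> i_gt0 /andP[lt_ij lt_jn].
suff : sin (angle n i) < sin (angle n j) by have := sin_angle_gt0 n i ltac:(lia); nra.
have [i0 iPI2] := angle_bounds n i ltac:(lia).
have [j0 jPI2] := angle_bounds n j ltac:(lia).
apply: sin_increasing_1; try lra.
have /lt_INR ij : (i < j)%coq_nat by lia.
have n0 : 0 < INR n by apply: lt_0_INR; lia.
rewrite /angle !Rdiv_def; apply: Rmult_lt_compat_r; first by apply: Rinv_0_lt_compat; lra.
by apply: Rmult_lt_compat_r => //; exact: PI_RGT_0.
Qed.

Lemma sin_double_complement_angle n j : (0 < n)%N -> (j <= n)%N ->
  sin (INR n.*2 * (PI / 2 - angle n j)) = 0.
Proof.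
move=> n_gt0 le_jn; rewrite -(sin_nat_PI (n - j)) -mul2n mult_INR minus_INR; last lia.
have := INR_half_angle _ n_gt0; rewrite /angle -Rmult_div_assoc.
set s := PI / (2 * INR n) => ns.
have jns : INR j * (INR n * s) = INR j * (PI / 2) by rewrite ns.
by congr sin; rewrite [INR 2]/=; lra.
Qed.

Section ChebyshevU.
Local Open Scope ring_scope.
Variable A : comNzRingType.

Fixpoint chebU (m : nat) : {poly A} :=
  match m with
  | 0 => 1
  | 1 => 'X *+ 2
  | (m'.+1 as m1).+1 => 'X *+ 2 * chebU m1 - chebU m'
  end.

Lemma chebUSS m : chebU m.+2 = 'X *+ 2 * chebU m.+1 - chebU m.
Proof. by []. Qed.

Lemma coef_chebU0SS m : (chebU m.+2)`_0 = - (chebU m)`_0.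
Proof. by rewrite chebUSS coefB mulrnAl coefMn coefXM mul0rn sub0r. Qed.

Lemma coef_chebUSS m j :
  (chebU m.+2)`_j.+1 = (chebU m.+1)`_j *+ 2 - (chebU m)`_j.+1.
Proof. by rewrite chebUSS coefB mulrnAl coefMn coefXM. Qed.

Lemma coef_chebU_eq0 m j : (m < j)%N || odd (m + j) -> (chebU m)`_j = 0.
Proof.
elim/ltn_ind: m j => -[|[|m]] IH [|j] hj.
- by move: hj; rewrite ltnn.
- by rewrite coef1.
- by rewrite coefMn coefX mul0rn.
- by rewrite coefMn coefX; case: j hj => [|j] //; rewrite mul0rn.
- by rewrite coef_chebU0SS IH ?oppr0 //; move: hj; rewrite !addn0 /= negbK.
rewrite coef_chebUSS !IH ?mul0rn ?subr0 //.
all: move: hj; rewrite !addSn !addnS /= !negbK => /orP[hmj|->]; rewrite ?orbT //.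
all: by apply/orP; left; lia.
Qed.

Lemma coef_chebU_lead m : (chebU m)`_m = 2 ^+ m.
Proof.
elim/ltn_ind: m => -[|[|m]] IH.
- by rewrite coef1.
- by rewrite coefMn coefX expr1.
rewrite coef_chebUSS IH // coef_chebU_eq0 ?leqnSn // subr0.
by rewrite [RHS]exprS mulr_natl.
Qed.

Lemma coef_chebU j i :
  (chebU (j + i.*2))`_j = (-1) ^+ i * 'C(j + i, i)%:R * 2 ^+ j.
Proof.
elim: i j => [|i IHi] j; first by rewrite addn0 bin0 coef_chebU_lead !mul1r.
elim: j => [|j IHj].
  by rewrite doubleS coef_chebU0SS -[i.*2]add0n IHi !add0n !binn exprS; ring.
have -> : (j.+1 + i.+1.*2 = (j.+1 + i.*2).+2)%N by lia.
rewrite coef_chebUSS IHi.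
have -> : ((j.+1 + i.*2).+1 = j + i.+1.*2)%N by lia.
rewrite IHj [(j.+1 + i.+1)%N]addSn binS addSnnS natrD !exprS; ring.
Qed.

Definition chebU_odd p := odd_poly (chebU p.*2.+1).

Lemma horner_chebU_odd p y : (chebU p.*2.+1).[y] = y * (chebU_odd p).[y ^+ 2].
Proof.
have even0 : even_poly (chebU p.*2.+1) = 0.
  apply/polyP => i; rewrite coef_even_poly coef0 coef_chebU_eq0 //.
  by rewrite addSn /= -doubleD odd_double orbT.
rewrite -{1}(poly_even_odd (chebU _)) even0 comp_poly0 add0r hornerM horner_comp.
by rewrite hornerXn hornerX mulrC.
Qed.

Lemma coef_chebU_odd p k : (k <= p)%N ->
  (chebU_odd p)`_k = (-1) ^+ (p - k) * 'C(p.+1 + k, p - k)%:R * 2 ^+ k.*2.+1.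
Proof.
move=> le_kp; have -> : (p.+1 + k = k.*2.+1 + (p - k))%N by lia.
by rewrite coef_odd_poly -coef_chebU; congr (chebU _)`__; lia.
Qed.

Lemma coef_chebU_odd_gt p i : (p < i)%N -> (chebU_odd p)`_i = 0.
Proof. by move=> lt_pi; rewrite coef_odd_poly coef_chebU_eq0 // ltnS ltn_double lt_pi. Qed.

Lemma coef_chebU_odd_lead p : (chebU_odd p)`_p = 2 ^+ p.*2.+1.
Proof. by rewrite coef_odd_poly coef_chebU_lead. Qed.

End ChebyshevU.

Section CosecantSquares.
Local Open Scope ring_scope.

Lemma size_chebU_odd (D : numDomainType) p : size (chebU_odd D p) = p.+1.
Proof.
apply/anti_leq/andP; split; first by apply/leq_sizeP => i /coef_chebU_odd_gt.
rewrite ltnNge; apply/negP => /leq_sizeP/(_ p (leqnn p)).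
by rewrite coef_chebU_odd_lead => /eqP; rewrite expf_eq0 pnatr_eq0 andbF.
Qed.

Lemma prod_XsubC_1subZX (F : fieldType) (l : seq F) : all (fun z => z != 0) l ->
  \prod_(z <- l) ('X - z%:P) =
  (\prod_(z <- l) - z) *: \prod_(w <- map GRing.inv l) (1 - w *: 'X).
Proof.
elim: l => [|z l IH] /=; first by rewrite !big_nil scale1r.
case/andP => z_neq0 /IH IHl; rewrite !big_cons IHl.
have -> : 'X - z%:P = - z *: (1 - z^-1 *: 'X).
  by rewrite scalerBr scalerA mulNr mulfV // scaleN1r opprK alg_polyC polyCN addrC.
by rewrite -scalerAl -scalerAr scalerA.
Qed.

Lemma binomial_div_fact (F : numFieldType) p k : (k <= p)%N ->
  'C(p.+1 + k, p - k)%:R / p.+1%:R = (p.+1 + k)`!%:R * p`!%:R /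
    ((k.*2.+1)`!%:R * (p - k)`!%:R * p.+1`!%:R) :> F.
Proof.
move=> le_kp; have := @bin_fact (p.+1 + k) (p - k) ltac:(lia).
have -> : (p.+1 + k - (p - k) = k.*2.+1)%N by lia.
move=> <-; rewrite [p.+1`!]factS !natrM; field.
by rewrite !(addrC 1) !natr1 !pnatr_eq0 -!lt0n !fact_gt0.
Qed.

Lemma esym0 l : Defs.esym 0 l = 1.
Proof. by case: l. Qed.

Lemma esymS k x l :
  Defs.esym k.+1 (x :: l) = Defs.esym k.+1 l + x * Defs.esym k l.
Proof. by []. Qed.

Lemma coef_prod_1subZX l i :
  (\prod_(w <- l) (1 - w *: 'X))`_i = (-1) ^+ i * Defs.esym i l.
Proof.
elim: l i => [|w l IH] i.
  by rewrite big_nil coef1; case: i => [|i]; rewrite ?esym0 ?mulr1 ?mulr0.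
rewrite big_cons mulrBl mul1r coefB -scalerAl coefZ coefXM.
case: i => [|i]; first by rewrite IH !esym0 mulr0 subr0.
by rewrite esymS /= !IH exprS; ring.
Qed.

Lemma chebU_sin m x : sin (INR m.+1 * x) = sin x * (chebU R m).[cos x].
Proof.
elim/ltn_ind: m => -[|[|m]] IH.
- by rewrite /= hornerC mulr1 Rmult_1_l.
- rewrite hornerMn hornerX sin_natSS /= Rmult_1_l Rmult_0_l sin_0.
  by rewrite RminusE RmultE RplusE R0E mulr2n; ring.
rewrite sin_natSS !IH // chebUSS hornerD hornerN hornerM hornerMn hornerX.
by rewrite RminusE RmultE RplusE mulr2n; ring.
Qed.

Lemma root_chebU_odd p j : (0 < j <= p)%N ->
  root (chebU_odd R p) (sin (angle p.+1 j) ^+ 2).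
Proof.
move=> j_range; have jn : (0 < j < p.+1)%N by lia.
have := sin_double_complement_angle p.+1 j isT ltac:(lia).
rewrite -[p.+1.*2]/(p.*2.+1).+1 chebU_sin horner_chebU_odd cos_shift sin_shift.
move/eqP; rewrite !mulf_eq0 => /orP[/eqP cos0|/orP[/eqP sin0|//]].
- by have := cos_angle_gt0 _ _ jn; rewrite cos0 => /Rlt_irrefl.
- by have := sin_angle_gt0 _ _ jn; rewrite sin0 => /Rlt_irrefl.
Qed.

Definition sin2_angles p := [seq sin (angle p.+1 j) ^+ 2 | j <- iota 1 p].

Lemma sin2_angles_neq0 p : all (fun z => z != 0) (sin2_angles p).
Proof.
apply/allP => z /mapP[j]; rewrite mem_iota => j_range ->.
by rewrite expf_neq0 //; apply/eqP/Rgt_not_eq/sin_angle_gt0; lia.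
Qed.

Lemma uniq_sin2_angles p : uniq (sin2_angles p).
Proof.
rewrite map_inj_in_uniq ?iota_uniq // => i j; rewrite !mem_iota => i_range j_range.
rewrite -!RpowE; case: (ltngtP i j) => // [lt_ij | lt_ji] eq_ij.
- by have := sin_angle_sqr_lt p.+1 i j ltac:(lia) ltac:(lia); rewrite eq_ij => /Rlt_irrefl.
- by have := sin_angle_sqr_lt p.+1 j i ltac:(lia) ltac:(lia); rewrite eq_ij => /Rlt_irrefl.
Qed.

Lemma chebU_odd_prod p :
  chebU_odd R p = 2 ^+ p.*2.+1 *: \prod_(z <- sin2_angles p) ('X - z%:P).
Proof.
have lead : lead_coef (chebU_odd R p) = 2 ^+ p.*2.+1.
  by rewrite lead_coefE size_chebU_odd coef_chebU_odd_lead.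
rewrite -lead; apply: all_roots_prod_XsubC.
- by rewrite size_chebU_odd size_map size_iota.
- by apply/allP => z /mapP[j]; rewrite mem_iota => j_range ->; apply: root_chebU_odd; lia.
- by rewrite uniq_rootsE uniq_sin2_angles.
Qed.

Lemma esym_inv_sin2_angles p k : (k <= p)%N ->
  Defs.esym k (map GRing.inv (sin2_angles p)) =
  4 ^+ k * ('C(p.+1 + k, p - k)%:R / p.+1%:R).
Proof.
move=> le_kp.
have factor : chebU_odd R p = (2 ^+ p.*2.+1 * \prod_(z <- sin2_angles p) - z) *:
    \prod_(w <- map GRing.inv (sin2_angles p)) (1 - w *: 'X).
  by rewrite chebU_odd_prod prod_XsubC_1subZX ?sin2_angles_neq0 // scalerA.
have := congr1 (fun P : {poly R} => P`_0) factor.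
have := congr1 (fun P : {poly R} => P`_k) factor.
rewrite /= !coefZ !coef_prod_1subZX !coef_chebU_odd // esym0 expr0 !mul1r mulr1.
rewrite addn0 subn0 binSn expr1 => coef_k coef_0.
have sgn : (-1) ^+ p = (-1) ^+ (p - k) * (-1) ^+ k :> R by rewrite -exprD subnK.
rewrite -coef_0 sgn in coef_k; set e := Defs.esym k _ in coef_k *.
have {}coef_k : (-1) ^+ (p - k) * 'C(p.+1 + k, p - k)%:R * 2 ^+ k.*2.+1 =
    (-1) ^+ (p - k) * p.+1%:R * 2 * e.
  by rewrite coef_k -[in RHS](signrMK k e); ring.
apply: (mulfI (x := (-1) ^+ (p - k) * p.+1%:R * 2)).
  by rewrite !mulf_neq0 ?signr_eq0 ?pnatr_eq0.
have four : 2 ^+ k.*2.+1 = 2 * 4 ^+ k :> R by rewrite exprS -mul2n exprM -natrX.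
by rewrite -coef_k four mulrA; field; rewrite addrC natr1 pnatr_eq0.
Qed.

End CosecantSquares.

Lemma List_seqE a b : List.seq a b = iota a b.
Proof. by elim: b a => //= b IH a; rewrite IH. Qed.

Lemma List_mapE (A B : Type) (f : A -> B) (l : list A) : List.map f l = map f l.
Proof. by elim: l => //= x l ->. Qed.

Theorem mainTheorem9 (n k : nat) (hn : (2 <= n)%coq_nat) (hk : (k <= (n - 1)%coq_nat)%coq_nat) :
  Defs.esym k (List.map (fun j : nat => csc2 (INR j * PI / (2 * INR n))) (List.seq 1 (n - 1)%coq_nat))
  = (4 ^ k * INR (fact (n + k)%coq_nat) * INR (fact (n - 1)%coq_nat))
    / (INR (fact (Nat.add (Nat.mul 2 k) 1)) * INR (fact (Nat.sub (Nat.sub n k) 1)) * INR (fact n)).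
Proof.
case: n hn hk => [|p] hn hk; first by lia.
change (Defs.esym k (List.map (fun j => csc2 (angle p.+1 j)) (List.seq 1 (p.+1 - 1)))
  = 4 ^ k * INR (fact (p.+1 + k)) * INR (fact (p.+1 - 1))
    / (INR (fact (2 * k + 1)) * INR (fact (p.+1 - k - 1)) * INR (fact p.+1))).
rewrite !factE.
have -> : (p.+1 - 1 = p)%N by lia.
have -> : (p.+1 - k - 1 = p - k)%N by lia.
have -> : (2 * k + 1 = k.*2.+1)%N by lia.
rewrite List_seqE List_mapE.
have -> : [seq csc2 (angle p.+1 j) | j <- iota 1 p] = map GRing.inv (sin2_angles p).
  by rewrite -map_comp; apply: eq_map => j /=; rewrite /csc2 RinvE RpowE.
rewrite esym_inv_sin2_angles ?binomial_div_fact; try lia.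
by rewrite !RdivE !RmultE RpowE !INRE -!mulrA IZRposE INRE.
Qed.
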